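(* Let $\mathcal{X}$ and $\mathcal{Y}$ be finite sets, let $n\ge1$ and $k\ge0$ be integers, and let $P_{\mathbf{y}|\mathbf{x}}$ be a channel from $\mathcal{X}^n$ to $\mathcal{Y}^n$. Let $P_{\mathbf{x}}$ be an arbitrary probability distribution on $\mathcal{X}^n$, let $s>0$ and $\lambda\in\mathbb{R}$. Let $(\mathbf{x},\mathbf{y},\bar{\mathbf{x}})$ be jointly distributed as $P_{\mathbf{x}}(\mathbf{x})P_{\mathbf{y}|\mathbf{x}}(\mathbf{y}|\mathbf{x})P_{\mathbf{x}}(\bar{\mathbf{x}})$. Define the generalized information density $$\imath_s(\mathbf{x},\mathbf{y})=\log_2\frac{P_{\mathbf{y}|\mathbf{x}}(\mathbf{y}|\mathbf{x})^s}{\mathbb{E}_{\bar{\mathbf{x}}}\big[P_{\mathbf{y}|\mathbf{x}}(\mathbf{y}|\bar{\mathbf{x}})^s\big]},$$ for each $\mathbf{y}$ the threshold $\tilde\lambda_{\mathbf{y}}=\big(2^{n\lambda}\,\mathbb{E}_{\bar{\mathbf{x}}}[P_{\mathbf{y}|\mathbf{x}}(\mathbf{y}|\bar{\mathbf{x}})^s]\big)^{1/s}$, and $$\widetilde{\mathrm{RCU}}_\lambda(k,n)=\mathbb{E}\Big[\min\Big\{1,(2^k-1)\Pr\big[P_{\mathbf{y}|\mathbf{x}}(\mathbf{y}|\bar{\mathbf{x}})\ge P_{\mathbf{y}|\mathbf{x}}(\mathbf{y}|\mathbf{x})\,\big|\,\mathbf{x},\mathbf{y}\big]\Big\}\,\mathbb{1}\{\imath_s(\mathbf{x},\mathbf{y})\ge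 n\lambda\}\Big],$$ $$\tilde\psi(\mathbf{y},\mathbf{x})=\Pr\Big[P_{\mathbf{y}|\mathbf{x}}(\mathbf{y}|\bar{\mathbf{x}})\ge\max\{P_{\mathbf{y}|\mathbf{x}}(\mathbf{y}|\mathbf{x}),\tilde\lambda_{\mathbf{y}}\}\,\Big|\,\mathbf{x},\mathbf{y}\Big].$$ Then there exists an $(n,k,\epsilon_{\mathsf T},\epsilon_{\mathsf U})$-code for $P_{\mathbf{y}|\mathbf{x}}$ satisfying simultaneously $$\epsilon_{\mathsf T}\le\widetilde{\mathrm{RCU}}_\lambda(k,n)+\Pr[\imath_s(\mathbf{x},\mathbf{y})<n\lambda]\qquad\text{and}\qquad \epsilon_{\mathsf U}\le\mathbb{E}\big[\min\{1,(2^k-1)\,\tilde\psi(\mathbf{y},\mathbf{x})\}\big].$$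
   Context: A channel from $\mathcal{X}^n$ to $\mathcal{Y}^n$ is a conditional probability mass function $P_{\mathbf{y}|\mathbf{x}}(\mathbf{y}|\mathbf{x})$, $\mathbf{x}\in\mathcal{X}^n$, $\mathbf{y}\in\mathcal{Y}^n$. (The paper notes the same statement applies to continuous alphabets with conditional densities in place of pmfs.) $\mathbb{1}\{\cdot\}$ is the indicator function; $\mathbb{E}_{\bar{\mathbf{x}}}$ denotes expectation over $\bar{\mathbf{x}}\sim P_{\mathbf{x}}$ with $\mathbf{y}$ fixed. Definition ($(n,k,\epsilon_{\mathsf T},\epsilon_{\mathsf U})$-code). An $(n,k,\epsilon_{\mathsf T},\epsilon_{\mathsf U})$-code for the channel $P_{\mathbf{y}|\mathbf{x}}$ consists of: (i) a discrete random variable $u$ with distribution $P_u$ on a set $\mathcal{U}$ with $|\mathcal{U}|\le 2$, known to both transmitter and receiver (common randomness); (ii) an encoder $\phi:\mathcal{U}\times\{1,\dots,2^k\}\to\mathcal{X}^n$; (iii) an erasure decoder $g:\mathcal{U}\times\mathcal{Y}^n\to\{0,1,\dots,2^k\}$, where output $0$ denotes an erasure. For each $u$ and $\hat w\in\{0,1,\dots,2^k\}$ let $\mathcal{D}_{u,\hat w}=\{\mathbf{y}: g(u,\mathbf{y})=\hat w\}$ (these partition $\mathcal{Y}^n$). The message $w$ is uniform on $\{1,\dots,2^k\}$ and independent of $u$, and given $u$ and $w=m$ the output $\mathbf{y}$ has law $P_{\mathbf{y}|\mathbf{x}}(\cdot\,|\,\phi(u,m))$. It is required that the total error probability and undetected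 error probability satisfy $$\frac{1}{2^k}\sum_{m=1}^{2^k}\sum_{\substack{m'=0\\ m'\ne m}}^{2^k}\Pr[\mathbf{y}\in\mathcal{D}_{u,m'}\mid w=m]\le\epsilon_{\mathsf T},\qquad \frac{1}{2^k}\sum_{m=1}^{2^k}\sum_{\substack{m'=1\\ m'\ne m}}^{2^k}\Pr[\mathbf{y}\in\mathcal{D}_{u,m'}\mid w=m]\le\epsilon_{\mathsf U},$$ where probabilities are over the pair $(u,\mathbf{y})$. *)

From HB Require Import structures.
From mathcomp Require Import all_boot all_order all_algebra.
From mathcomp Require Import all_classical all_reals exp.
Set Implicit Arguments. Unset Strict Implicit. Unset Printing Implicit Defensive.
Import Order.TTheory GRing.Theory Num.Theory.
Local Open Scope ring_scope.

Section Defs.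
Variable R : realType.

Definition is_pmf (T : finType) (P : T -> R) : Prop :=
  (forall t, 0 <= P t) /\ \sum_(t : T) P t = 1.

Definition is_channel (A B : finType) (W : A -> B -> R) : Prop :=
  forall a, is_pmf (W a).

Definition log2 (x : R) : R := ln x / ln 2.

Variables (A B : finType) (W : A -> B -> R) (Px : A -> R) (s : R).

Definition Ebar (y : B) : R := \sum_(xb : A) Px xb * (W xb y `^ s).

Definition info_s (x : A) (y : B) : R := log2 (W x y `^ s / Ebar y).

Definition Exy (f : A -> B -> R) : R :=
  \sum_(x : A) \sum_(y : B) Px x * W x y * f x y.

Definition Prbar (p : A -> bool) : R := \sum_(xb : A) Px xb * (p xb)%:R.

End Defs.

(* An (n,k,epsT,epsU)-code with common randomness u on U, |U| <= 2.
   Messages {1,..,2^k} are represented by 'I_(2^k); the decoder output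
   None is the erasure 0, Some m is message m. *)
Definition total_err (R : realType) (A B U : finType) (k : nat)
  (W : A -> B -> R) (Pu : U -> R) (enc : U -> 'I_(2^k) -> A)
  (dec : U -> B -> option 'I_(2^k)) : R :=
  (2^k)%:R^-1 * \sum_(m : 'I_(2^k)) \sum_(u : U) Pu u *
     \sum_(y : B) W (enc u m) y * (dec u y != Some m)%:R.

Definition undet_err (R : realType) (A B U : finType) (k : nat)
  (W : A -> B -> R) (Pu : U -> R) (enc : U -> 'I_(2^k) -> A)
  (dec : U -> B -> option 'I_(2^k)) : R :=
  (2^k)%:R^-1 * \sum_(m : 'I_(2^k)) \sum_(u : U) Pu u *
     \sum_(y : B) W (enc u m) y * ((dec u y != Some m) && (dec u y != None))%:R.

Definition is_code (R : realType) (A B : finType) (k : nat) (W : A -> B -> R)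
  (epsT epsU : R) : Prop :=
  exists (U : finType) (Pu : U -> R) (enc : U -> 'I_(2^k) -> A)
         (dec : U -> B -> option 'I_(2^k)),
    [/\ (#|U| <= 2)%N, is_pmf Pu,
        total_err W Pu enc dec <= epsT & undet_err W Pu enc dec <= epsU].

From HB Require Import structures.
From mathcomp Require Import all_boot all_order all_algebra.
From mathcomp Require Import all_classical all_reals exp.
From mathcomp Require Import ring lra.
Import Order.TTheory GRing.Theory Num.Theory.
Local Open Scope ring_scope.

(* Draw the 2^k codewords i.i.d. from [Px] and decode by maximum likelihood,
   erasing when the best likelihood is below the threshold [lamt y].  Averaged
   over the codebook, the union bound (with [min 1 _] kept inside the
   expectation) bounds the total error by RCU + Pr[i_s < n lam], since on
   [i_s >= n lam] the transmitted codeword clears the threshold, and the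
   undetected error by E[min 1 ((2^k - 1) psit)].  Two averaged inequalities
   are met simultaneously by a mixture of at most two codebooks: this mixture
   is the common randomness, with |U| <= 2. *)

Section TwoPointMixture.
Context {R : realType} {I : finType} (q : I -> R).
Hypotheses (q_ge0 : forall i, 0 <= q i) (q_sum1 : \sum_i q i = 1).

Lemma avg_gt0 (z : I -> R) : (forall i, 0 < z i) -> 0 < \sum_i q i * z i.
Proof.
move=> z_gt0; have [i qi_gt0] : exists i, 0 < q i.
  case: (boolP [exists i, 0 < q i]) => [/existsP // | /existsPn q_le0].
  have q0 i : q i = 0 by apply/eqP; rewrite eq_le q_ge0 leNgt q_le0.
  have : \sum_i q i = 0 by apply: big1 => j _; exact: q0.
  by rewrite q_sum1 => /eqP; rewrite oner_eq0.
rewrite (bigD1 i) //= ltr_wpDr ?mulr_gt0 //.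
by apply: sumr_ge0 => j _; rewrite mulr_ge0 ?q_ge0 ?ltW ?z_gt0.
Qed.

Lemma exists_le0_of_avg_le0 {z : I -> R} :
  \sum_i q i * z i <= 0 -> exists i, z i <= 0.
Proof.
move=> avg_le0; case: (boolP [exists i, z i <= 0]) => [/existsP // | /existsPn z_gt0].
by move: avg_le0; rewrite leNgt avg_gt0 // => i; rewrite ltNge z_gt0.
Qed.

Lemma avg_le0_vanish (f : I -> R) : (forall i, 0 <= f i) ->
  \sum_i q i * f i <= 0 -> forall i, 0 < f i -> q i = 0.
Proof.
move=> f_ge0 avg_le0 i fi_gt0.
have qf_ge0 j : 0 <= q j * f j by rewrite mulr_ge0.
have sum0 : \sum_j q j * f j = 0 by apply/eqP; rewrite eq_le avg_le0 sumr_ge0.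
have /eqP := @psumr_eq0P _ _ _ _ (fun j _ => qf_ge0 j) sum0 i isT.
by rewrite mulf_eq0 (gt_eqF fi_gt0) orbF => /eqP.
Qed.

Lemma mixture_le0_of_cross (a1 b1 a2 b2 : R) :
  a1 <= 0 -> 0 < a2 -> a2 * b1 <= a1 * b2 ->
  exists th : R,
    [/\ 0 <= th <= 1, th * a1 + (1 - th) * a2 <= 0 & th * b1 + (1 - th) * b2 <= 0].
Proof.
move=> a1_le0 a2_gt0 cross; have d_gt0 : 0 < a2 - a1 by lra.
set th := a2 / (a2 - a1).
have th_a : th * a1 + (1 - th) * a2 = 0 by rewrite /th; field; rewrite gt_eqF.
have th_b : th * b1 + (1 - th) * b2 = (a2 * b1 - a1 * b2) / (a2 - a1).
  by rewrite /th; field; rewrite gt_eqF.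
exists th; rewrite th_a th_b lexx pmulr_lle0 ?invr_gt0 // subr_le0 cross; split=> //.
apply/andP; split; first by rewrite divr_ge0 ?ltW.
by rewrite ler_pdivrMr // mul1r; lra.
Qed.

(* Maximise [-a i / b i] over [a i <= 0]; the line through the origin with that
   slope has every [(a k, b k)] with [a k <= 0] on one side, so the average
   forces some [(a j, b j)] with [a j > 0] onto the other side. *)
Lemma two_point_mixture0 (a b : I -> R) :
  \sum_i q i * a i <= 0 -> \sum_i q i * b i <= 0 ->
  exists i j (th : R),
    [/\ 0 <= th <= 1, th * a i + (1 - th) * a j <= 0 & th * b i + (1 - th) * b j <= 0].
Proof.
move=> avg_a avg_b.
case: (boolP [exists i, (a i <= 0) && (b i <= 0)]).
  case/existsP=> i /andP[ai bi]; exists i, i, 1.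
  by rewrite subrr !mul0r !addr0 !mul1r lexx ler01.
move=> /existsPn no_dom.
have b_gt0 i : a i <= 0 -> 0 < b i by move=> ai; move: (no_dom i); rewrite ai ltNge.
have [i0 ai0] := exists_le0_of_avg_le0 avg_a.
case: (@arg_maxP _ _ I i0 (fun i => a i <= 0) (fun i => - a i / b i) ai0).
move=> i ai r_max; set r := - a i / b i in r_max.
have r_ge0 : 0 <= r by rewrite divr_ge0 ?oppr_ge0 // ltW // b_gt0.
pose f k := a k + r * b k.
have f_ge0_le0 k : a k <= 0 -> 0 <= f k.
  move=> ak; have := r_max k ak; rewrite /= ler_pdivrMr ?b_gt0 // /f; lra.
have avg_f : \sum_k q k * f k <= 0.
  under eq_bigr do rewrite mulrDr mulrCA.
  rewrite big_split -mulr_sumr /=; have := mulr_ge0_le0 r_ge0 avg_b; lra.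
have [j /andP[aj fj]] : exists j, (0 < a j) && (f j <= 0).
  case: (boolP [exists j, (0 < a j) && (f j <= 0)]) => [/existsP // | /existsPn f_gt0].
  have f_gt0_gt0 k : 0 < a k -> 0 < f k by move=> ak; move: (f_gt0 k); rewrite ak ltNge.
  have f_ge0 k : 0 <= f k by case: (leP (a k) 0) => [/f_ge0_le0 | /f_gt0_gt0/ltW].
  have q0 k : 0 < a k -> q k = 0 by move/f_gt0_gt0; exact: avg_le0_vanish.
  pose z k := if a k <= 0 then b k else 1.
  have : 0 < \sum_k q k * z k by apply: avg_gt0 => k; rewrite /z; case: ifP => // /b_gt0.
  rewrite (eq_bigr (fun k => q k * b k)) ?ltNge ?avg_b // => k _.
  by rewrite /z; case: leP => // /q0 ->; rewrite !mul0r.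
exists i, j; apply: mixture_le0_of_cross => //; have bi := b_gt0 i ai.
have expand : f j * b i = a j * b i - a i * b j by rewrite /f /r; field; rewrite gt_eqF.
by have := mulr_le0_ge0 fj (ltW bi); rewrite expand; lra.
Qed.

Lemma two_point_mixture {t v : I -> R} {a b : R} :
  \sum_i q i * t i <= a -> \sum_i q i * v i <= b ->
  exists i j (th : R),
    [/\ 0 <= th <= 1, th * t i + (1 - th) * t j <= a & th * v i + (1 - th) * v j <= b].
Proof.
have avg_sub (z : I -> R) c : \sum_i q i * (z i - c) = \sum_i q i * z i - c.
  by under eq_bigr do rewrite mulrBr; rewrite sumrB -mulr_suml q_sum1 mul1r.
move=> avg_t avg_v.
have [|| i [j [th [th01 ta vb]]]] :=
  @two_point_mixture0 (fun i => t i - a) (fun i => v i - b); rewrite ?avg_sub ?subr_le0 //.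
by exists i, j, th; split => //; lra.
Qed.

End TwoPointMixture.

Section RandomCodebook.
Context {R : realType} {I A : finType} (Px : A -> R).
Hypotheses (Px_ge0 : forall x, 0 <= Px x) (Px_sum1 : \sum_x Px x = 1).

Definition code_pr (C : {ffun I -> A}) : R := \prod_i Px (C i).

Lemma code_pr_ge0 C : 0 <= code_pr C.
Proof. by apply: prodr_ge0 => i _. Qed.

Lemma sum_code_pr_prod (S : {set I}) (F : I -> A -> R) :
  \sum_C code_pr C * \prod_(i in S) F i (C i) = \prod_(i in S) \sum_x Px x * F i x.
Proof.
pose G i x := Px x * (if i \in S then F i x else 1).
have -> : \prod_(i in S) \sum_x Px x * F i x = \prod_i \sum_x G i x.
  rewrite big_mkcond; apply: eq_bigr => i _; rewrite /G.
  by case: ifP => _ //; under eq_bigr do rewrite mulr1.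
rewrite bigA_distr_bigA; apply: eq_bigr => C _.
by rewrite /G big_split /= -big_mkcond.
Qed.

Lemma sum_code_pr : \sum_C code_pr C = 1.
Proof.
have := sum_code_pr_prod finset.set0 (fun _ _ => 0); rewrite !big_set0.
by under eq_bigr do rewrite mulr1.
Qed.

Lemma code_pr_marginal m (f : A -> R) :
  \sum_C code_pr C * f (C m) = \sum_x Px x * f x.
Proof.
have := sum_code_pr_prod [set m] (fun _ => f); rewrite big_set1 => <-.
by apply: eq_bigr => C _; rewrite big_set1.
Qed.

Lemma code_pr_pair_marginal m m' (f g : A -> R) : m' != m ->
  \sum_C code_pr C * (f (C m) * g (C m'))
  = (\sum_x Px x * f x) * (\sum_x Px x * g x).
Proof.
move=> m'm; pose F i := if i == m then f else g.
have m_notin : m \notin ([set m'] : {set I}) by rewrite inE eq_sym.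
have prod2 (G : I -> R) : \prod_(i in m |: [set m']) G i = G m * G m'.
  by rewrite big_setU1 // big_set1.
have := sum_code_pr_prod (m |: [set m']) F.
rewrite prod2 /F eqxx (negbTE m'm) => <-.
by apply: eq_bigr => C _; rewrite prod2 /F eqxx (negbTE m'm).
Qed.

Lemma sum_min1_le {J : finType} {w z : J -> R} : (forall j, 0 <= w j) ->
  \sum_j w j * Num.min 1 (z j) <= Num.min (\sum_j w j) (\sum_j w j * z j).
Proof.
move=> w_ge0; rewrite le_min; apply/andP; split; apply: ler_sum => j _.
  by rewrite -[leRHS]mulr1 ler_wpM2l // ge_min lexx.
by rewrite ler_wpM2l // ge_min lexx orbT.
Qed.

Lemma sumr_neq_const (m : I) (c : R) : \sum_(m' | m' != m) c = (#|I| - 1)%:R * c.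
Proof. by rewrite sumr_const cardC1 subn1 mulr_natl. Qed.

Lemma sumr_mul_pred1 (x0 : A) : \sum_x Px x * (x == x0)%:R = Px x0.
Proof.
rewrite (bigD1 x0) //= eqxx mulr1 big1 ?addr0 // => x /negbTE ->.
exact: mulr0.
Qed.

(* The random-coding union bound: conditionally on [C m = x] the other codewords
   are i.i.d., and [E min(1, S) <= min(1, E S)]. *)
Lemma code_pr_union_bound m (h : A -> R) (phi : A -> A -> bool) :
  (forall x, 0 <= h x) ->
  \sum_C code_pr C * (h (C m) * Num.min 1 (\sum_(m' | m' != m) (phi (C m) (C m'))%:R))
  <= \sum_x Px x * (h x * Num.min 1 ((#|I| - 1)%:R * Prbar Px (phi x))).
Proof.
move=> h_ge0.
pose S x (C : {ffun I -> A}) : R := \sum_(m' | m' != m) (phi x (C m'))%:R.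
pose w x C := code_pr C * (C m == x)%:R.
have condition C : code_pr C * (h (C m) * Num.min 1 (S (C m) C))
    = \sum_x h x * (w x C * Num.min 1 (S x C)).
  rewrite (bigD1 (C m)) //= /w eqxx mulr1 mulrCA big1 ?addr0 // => x /negbTE.
  by rewrite eq_sym => ->; rewrite mulr0 mul0r mulr0.
rewrite (eq_bigr _ (fun C _ => condition C)) exchange_big /=; apply: ler_sum => x _.
rewrite -mulr_sumr mulrCA ler_wpM2l //.
have w_ge0 C : 0 <= w x C by rewrite mulr_ge0 ?code_pr_ge0.
have w_sum : \sum_C w x C = Px x.
  by rewrite (code_pr_marginal m (fun z => (z == x)%:R)) sumr_mul_pred1.
have wS_sum : \sum_C w x C * S x C = Px x * ((#|I| - 1)%:R * Prbar Px (phi x)).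
  under eq_bigr do rewrite mulr_sumr.
  rewrite exchange_big /= (eq_bigr (fun _ => Px x * Prbar Px (phi x))).
    by rewrite sumr_neq_const mulrCA.
  move=> m' m'm; under eq_bigr do rewrite -mulrA.
  rewrite (code_pr_pair_marginal m m' (fun z => (z == x)%:R) (fun z => (phi x z)%:R) m'm).
  by rewrite sumr_mul_pred1.
apply: (le_trans (sum_min1_le w_ge0)).
by rewrite w_sum wS_sum minr_pMr // mulr1.
Qed.

End RandomCodebook.

Section MessageErrors.
Context {R : realType} {I A B U : finType} (W : A -> B -> R).

Definition msg_err (E : I -> option I -> bool) (enc : I -> A) (dec : B -> option I) : R :=
  #|I|%:R^-1 * \sum_m \sum_y W (enc m) y * (E m (dec y))%:R.

Definition total_event (m : I) (o : option I) := o != Some m.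
Definition undetected_event (m : I) (o : option I) := (o != Some m) && (o != None).

Lemma msg_err_mix (E : I -> option I -> bool) (Pu : U -> R)
    (enc : U -> I -> A) (dec : U -> B -> option I) :
  #|I|%:R^-1 * \sum_m \sum_u Pu u * \sum_y W (enc u m) y * (E m (dec u y))%:R
  = \sum_u Pu u * msg_err E (enc u) (dec u).
Proof.
rewrite exchange_big mulr_sumr; apply: eq_bigr => u _.
by rewrite /msg_err -mulr_sumr mulrCA.
Qed.

Lemma avg_msg_err_le (T : finType) (w : T -> R) (F : T -> I -> R) (bd : R) :
  (0 < #|I|)%N -> (forall m, \sum_t w t * F t m <= bd) ->
  \sum_t w t * (#|I|%:R^-1 * \sum_m F t m) <= bd.
Proof.
move=> I_gt0 avg_le.
have -> : \sum_t w t * (#|I|%:R^-1 * \sum_m F t m)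
    = #|I|%:R^-1 * \sum_m \sum_t w t * F t m.
  rewrite exchange_big mulr_sumr; apply: eq_bigr => t _.
  by rewrite mulrCA mulr_sumr.
rewrite ler_pdivrMl ?ltr0n //.
apply: (le_trans (ler_sum _ (fun m _ => avg_le m))).
by rewrite sumr_const mulr_natl.
Qed.

End MessageErrors.

Lemma total_err_mix (R : realType) (A B U : finType) (k : nat) (W : A -> B -> R)
    (Pu : U -> R) (enc : U -> 'I_(2^k) -> A) (dec : U -> B -> option 'I_(2^k)) :
  total_err W Pu enc dec
  = \sum_u Pu u * msg_err W total_event (enc u) (dec u).
Proof. by rewrite -msg_err_mix card_ord. Qed.

Lemma undet_err_mix (R : realType) (A B U : finType) (k : nat) (W : A -> B -> R)
    (Pu : U -> R) (enc : U -> 'I_(2^k) -> A) (dec : U -> B -> option 'I_(2^k)) :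
  undet_err W Pu enc dec
  = \sum_u Pu u * msg_err W undetected_event (enc u) (dec u).
Proof. by rewrite -msg_err_mix card_ord. Qed.

Section ThresholdDecoder.
Context {R : realType} {I A B : finType} (m0 : I) (W : A -> B -> R) (thr : B -> R).

Definition thr_dec (C : {ffun I -> A}) (y : B) : option I :=
  let mh := [arg max_(m > m0) W (C m) y]%O in
  if thr y <= W (C mh) y then Some mh else None.

Lemma thr_dec_miss (C : {ffun I -> A}) (m : I) (y : B) :
  thr y <= W (C m) y -> thr_dec C y != Some m ->
  exists2 m', m' != m & W (C m) y <= W (C m') y.
Proof.
rewrite /thr_dec; case: arg_maxP => //= mh _ mh_max thr_m.
case: leP => [_ | thr_gt _].
  by rewrite (inj_eq Some_inj) => mh_m; exists mh; last exact: mh_max.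
by have := le_lt_trans (le_trans thr_m (mh_max m isT)) thr_gt; rewrite ltxx.
Qed.

Lemma thr_dec_undetected (C : {ffun I -> A}) (m : I) (y : B) :
  thr_dec C y != Some m -> thr_dec C y != None ->
  exists2 m', m' != m & Num.max (W (C m) y) (thr y) <= W (C m') y.
Proof.
rewrite /thr_dec; case: arg_maxP => //= mh _ mh_max.
case: ifP => // thr_mh; rewrite (inj_eq Some_inj) => mh_m _.
by exists mh; rewrite // ge_max thr_mh mh_max.
Qed.

End ThresholdDecoder.

Lemma bool_le_min1_sum (R : realType) (I : finType) (b : bool) (phi : I -> bool) (m : I) :
  (b -> exists2 m', m' != m & phi m') ->
  b%:R <= Num.min 1 (\sum_(m' | m' != m) (phi m')%:R) :> R.
Proof.
case: b => [/(_ isT) [m' m'm phim'] | _]; last by rewrite le_min ler01 sumr_ge0.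
by rewrite le_min lexx (bigD1 m') //= phim' lerDl sumr_ge0.
Qed.

Section ThresholdBound.
Context {R : realType} {A B : finType} (W : A -> B -> R) (Px : A -> R) (s nl : R).
Hypotheses (Px_ge0 : forall x, 0 <= Px x) (s_gt0 : 0 < s).

Lemma Ebar_ge0 y : 0 <= Ebar W Px s y.
Proof. by apply: sumr_ge0 => x _; rewrite mulr_ge0 ?powR_ge0. Qed.

(* A large information density puts the likelihood above the threshold; when
   [Ebar y = 0] the threshold is [0 `^ s^-1 = 0]. *)
Lemma thr_le_of_info_ge x y : 0 < W x y -> nl <= info_s W Px s x y ->
  (2 `^ nl * Ebar W Px s y) `^ s^-1 <= W x y.
Proof.
move=> W_gt0 info_ge; have [E0 | E_gt0] := eqVneq (Ebar W Px s y) 0.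
  by rewrite E0 mulr0 powR0 ?invr_eq0 ?gt_eqF // ltW.
have {}E_gt0 : 0 < Ebar W Px s y by rewrite lt_def E_gt0 Ebar_ge0.
have ln2_gt0 : 0 < ln (2 : R) by rewrite ln_gt0 // ltr1n.
have thr_s : 2 `^ nl * Ebar W Px s y <= W x y `^ s.
  have Ws_gt0 : 0 < W x y `^ s by rewrite powR_gt0.
  rewrite -ler_pdivlMr // -ler_ln ?posrE ?powR_gt0 ?divr_gt0 // ln_powR.
  by rewrite -ler_pdivlMr.
have W_eq : W x y = (W x y `^ s) `^ s^-1.
  by rewrite -powRrM mulfV ?gt_eqF // powRr1 // ltW.
rewrite [leRHS]W_eq ge0_ler_powR // ?invr_ge0 ?ltW // nnegrE ?powR_ge0 //.
by rewrite mulr_ge0 ?powR_ge0 ?ltW.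
Qed.

End ThresholdBound.

Lemma ExyD (R : realType) (A B : finType) (W : A -> B -> R) (Px : A -> R)
    (f g : A -> B -> R) :
  Exy W Px (fun x y => f x y + g x y) = Exy W Px f + Exy W Px g.
Proof.
rewrite /Exy -big_split; apply: eq_bigr => x _.
by rewrite -big_split; apply: eq_bigr => y _; rewrite mulrDr.
Qed.

Section RandomThresholdCoding.
Context {R : realType} {I A B : finType} (m0 : I) (W : A -> B -> R) (Px : A -> R).
Context (thr : B -> R) (good : A -> B -> bool).
Hypotheses (Px_ge0 : forall x, 0 <= Px x) (Px_sum1 : \sum_x Px x = 1).
Hypotheses (W_ge0 : forall x y, 0 <= W x y)
  (thr_good : forall x y, good x y -> 0 < W x y -> thr y <= W x y).

Local Notation M := ((#|I| - 1)%:R : R).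
Local Notation dec C := (thr_dec m0 W thr C).

Lemma avg_total_event_at (m : I) (y : B) :
  \sum_C code_pr Px C * (W (C m) y * (total_event m (dec C y))%:R)
  <= \sum_x Px x * W x y * (Num.min 1 (M * Prbar Px (fun xb => W x y <= W xb y))
                            * (good x y)%:R + (~~ good x y)%:R).
Proof.
pose h1 x := W x y * (good x y)%:R; pose h2 x := W x y * (~~ good x y)%:R.
have pointwise (C : {ffun I -> A}) :
    W (C m) y * (total_event m (dec C y))%:R
    <= h1 (C m) * Num.min 1 (\sum_(m' | m' != m) (W (C m) y <= W (C m') y)%R%:R)
       + h2 (C m).
  rewrite /h1 /h2; have := W_ge0 (C m) y; rewrite le_eqVlt => /predU1P[<- | W_gt0].
    by rewrite !mul0r addr0.
  case: (boolP (good (C m) y)) => g /=; last first.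
    by rewrite mulr0 mul0r add0r mulr1 ler_piMr // lern1 leq_b1.
  rewrite mulr1 mulr0 addr0 ler_wpM2l //.
  by apply: bool_le_min1_sum; apply: thr_dec_miss; apply: thr_good.
apply: (le_trans (ler_sum _ (fun C _ => ler_wpM2l (code_pr_ge0 _ Px_ge0 C) (pointwise C)))).
under eq_bigr do rewrite mulrDr.
rewrite big_split /= (code_pr_marginal _ Px_sum1 m h2).
have h1_ge0 x : 0 <= h1 x by rewrite mulr_ge0.
have union :=
  code_pr_union_bound _ Px_ge0 Px_sum1 m h1 (fun a b => W a y <= W b y)%R h1_ge0.
apply: le_trans (lerD union (lexx _)) _.
rewrite -big_split /=; apply: ler_sum => x _.
by rewrite le_eqVlt /h1 /h2; apply/orP; left; apply/eqP; ring.
Qed.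

Lemma avg_undetected_event_at (m : I) (y : B) :
  \sum_C code_pr Px C * (W (C m) y * (undetected_event m (dec C y))%:R)
  <= \sum_x Px x * W x y
       * Num.min 1 (M * Prbar Px (fun xb => Num.max (W x y) (thr y) <= W xb y)).
Proof.
have union := code_pr_union_bound _ Px_ge0 Px_sum1 m (W^~ y)
  (fun a b => Num.max (W a y) (thr y) <= W b y)%R (W_ge0^~ y).
under [leRHS]eq_bigr do rewrite -mulrA.
apply: le_trans union; apply: ler_sum => C _.
rewrite ler_wpM2l ?code_pr_ge0 ?ler_wpM2l //.
by apply: bool_le_min1_sum => /andP[]; exact: thr_dec_undetected.
Qed.

Lemma avg_total_err :
  \sum_C code_pr Px C * msg_err W total_event C (dec C)
  <= Exy W Px (fun x y => Num.min 1 (M * Prbar Px (fun xb => W x y <= W xb y))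
                          * (good x y)%:R)
     + Exy W Px (fun x y => (~~ good x y)%:R).
Proof.
apply: avg_msg_err_le => [|m]; first by apply/card_gt0P; exists m0.
rewrite -ExyD /Exy exchange_big /=; under eq_bigr do rewrite mulr_sumr.
rewrite exchange_big /=; apply: ler_sum => y _; exact: avg_total_event_at.
Qed.

Lemma avg_undetected_err :
  \sum_C code_pr Px C * msg_err W undetected_event C (dec C)
  <= Exy W Px (fun x y =>
       Num.min 1 (M * Prbar Px (fun xb => Num.max (W x y) (thr y) <= W xb y))).
Proof.
apply: avg_msg_err_le => [|m]; first by apply/card_gt0P; exists m0.
rewrite /Exy exchange_big /=; under eq_bigr do rewrite mulr_sumr.
rewrite exchange_big /=; apply: ler_sum => y _; exact: avg_undetected_event_at.
Qed.

End RandomThresholdCoding.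

Theorem theorem2 (R : realType) (X Y : finType) (n k : nat)
  (W : n.-tuple X -> n.-tuple Y -> R) (Px : n.-tuple X -> R) (s lam : R) :
  (1 <= n)%N -> is_channel W -> is_pmf Px -> 0 < s ->
  let M : R := (2^k - 1)%:R in
  let nl : R := n%:R * lam in
  let lamt (y : n.-tuple Y) : R := (2 `^ nl * Ebar W Px s y) `^ (s^-1) in
  let RCU : R := Exy W Px (fun x y =>
      Num.min 1 (M * Prbar Px (fun xb => W x y <= W xb y))
      * (nl <= info_s W Px s x y)%R%:R) in
  let Pbad : R := Exy W Px (fun x y => (info_s W Px s x y < nl)%R%:R) in
  let psit (y : n.-tuple Y) (x : n.-tuple X) : R :=
      Prbar Px (fun xb => Num.max (W x y) (lamt y) <= W xb y) in
  is_code k W (RCU + Pbad) (Exy W Px (fun x y => Num.min 1 (M * psit y x))).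
Proof.
move=> _ W_pmf [Px_ge0 Px_sum1] s_gt0 M nl lamt RCU Pbad psit.
have W_ge0 x y : 0 <= W x y := (W_pmf x).1 y.
pose good x y := (nl <= info_s W Px s x y)%R.
have thr_good x y : good x y -> 0 < W x y -> lamt y <= W x y.
  by move=> info_ge W_gt0; apply: thr_le_of_info_ge.
have Pbad_good : Pbad = Exy W Px (fun x y => (~~ good x y)%:R).
  by apply: eq_bigr => x _; apply: eq_bigr => y _; rewrite ltNge.
pose m0 : 'I_(2^k) := Ordinal (expn_gt0 2 k).
have avg_T := avg_total_err m0 W Px lamt good Px_ge0 Px_sum1 W_ge0 thr_good.
have avg_U := avg_undetected_err m0 W Px lamt Px_ge0 Px_sum1 W_ge0.
rewrite card_ord -/M -Pbad_good in avg_T; rewrite card_ord -/M in avg_U.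
have [C1 [C2 [th [/andP[th_ge0 th_le1] err_T err_U]]]] :=
  two_point_mixture _ (code_pr_ge0 _ Px_ge0) (sum_code_pr _ Px_sum1) avg_T avg_U.
pose C b := if b then C1 else C2.
exists bool, (fun b => if b then th else 1 - th), (fun b => C b : 'I_(2^k) -> _),
  (fun b => thr_dec m0 W lamt (C b)); split.
- by rewrite card_bool.
- by split; [case; rewrite ?subr_ge0 | rewrite big_bool /= subrKC].
- by rewrite total_err_mix big_bool.
- by rewrite undet_err_mix big_bool.
Qed.
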